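(* Let $G$ be a nice graph with no two adjacent vertices of the same degree. If $G$ has an interval coloring, then $\chi'_{qm\Sigma}(G)=2$.
   Context: All graphs are simple and finite. A $k$-edge-coloring of $G$ is any map $c:E(G)\to\{1,\dots,k\}$. An interval coloring of $G$ is a $k$-edge-coloring (for some $k$) in which the colors of the edges incident to each vertex are pairwise distinct and form an interval of consecutive integers. A $k$-edge-coloring $c$ induces $\sigma_c(v)=\sum_{u\in N(v)}c(vu)$; it is neighbor sum distinguishing (NSD) if $\sigma_c(u)\ne\sigma_c(v)$ for every edge $uv$, and quasi-majority if every vertex $v$ is incident to at most $\lceil d(v)/2\rceil$ edges of each single color. $\chi'_{qm\Sigma}(G)$ denotes the least $k$ such that $G$ has a $k$-edge-coloring that is both quasi-majority and NSD. A graph is nice if it has no connected component isomorphic to $K_2$. *)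

From mathcomp Require Import all_boot.
Set Implicit Arguments. Unset Strict Implicit. Unset Printing Implicit Defensive.

Section Graphs.
Variable T : finType.

Definition simple_graph (e : rel T) : Prop := symmetric e /\ irreflexive e.

Definition edges (e : rel T) : {set {set T}} :=
  [set [set x; y] | x in T, y in T & e x y].

Definition nbhd (e : rel T) (v : T) : {set T} := [set u | e v u].
Definition deg (e : rel T) (v : T) : nat := #|nbhd e v|.

Definition is_k_edge_coloring (e : rel T) (k : nat) (c : {set T} -> nat) : Prop :=
  forall E, E \in edges e -> 1 <= c E <= k.

(* colors at v are pairwise distinct and form an interval of consecutive integers *)
Definition is_interval_coloring (e : rel T) (c : {set T} -> nat) : Prop :=
  (exists k, is_k_edge_coloring e k c) /\
  forall v, exists a,
    perm_eq [seq c [set v; u] | u <- enum (nbhd e v)] (iota a (deg e v)).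

Definition has_interval_coloring (e : rel T) : Prop :=
  exists c, is_interval_coloring e c.

Definition sigma (e : rel T) (c : {set T} -> nat) (v : T) : nat :=
  \sum_(u in nbhd e v) c [set v; u].

Definition nsd (e : rel T) (c : {set T} -> nat) : Prop :=
  forall u v, e u v -> sigma e c u <> sigma e c v.

Definition quasi_majority (e : rel T) (c : {set T} -> nat) : Prop :=
  forall v i, #|[set u in nbhd e v | c [set v; u] == i]| <= uphalf (deg e v).

Definition qm_nsd_colorable (e : rel T) (k : nat) : Prop :=
  exists c, is_k_edge_coloring e k c /\ quasi_majority e c /\ nsd e c.

Definition chi_qmS_eq (e : rel T) (k : nat) : Prop :=
  qm_nsd_colorable e k /\ forall j, j < k -> ~ qm_nsd_colorable e j.

(* no connected component isomorphic to K_2, i.e. no component consisting of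
   exactly two (necessarily adjacent) vertices *)
Definition nice (e : rel T) : Prop :=
  ~ exists u v, e u v /\ [set w | connect e u w] = [set u; v].

End Graphs.

From mathcomp Require Import all_boot.
From mathcomp Require Import zify.

Set Implicit Arguments.
Unset Strict Implicit.
Unset Printing Implicit Defensive.

(* Recolour an interval colouring by parity: odd colours become 1, even ones 2.
   At a vertex of degree d the old colours are d consecutive integers, so each
   new colour occurs at most ceil(d/2) times (quasi-majority), and the new sum is
   d plus the number of even colours, i.e. between d + floor(d/2) and
   d + ceil(d/2).  These ranges are disjoint for distinct degrees, so adjacent
   vertices of distinct degrees get distinct sums.  Conversely one colour cannot
   work: quasi-majority would force every degree to be at most 1, while an edge
   whose ends have distinct (positive) degrees has an end of degree at least 2. *)

Definition parity_color (n : nat) : nat := if odd n then 1 else 2.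

Lemma count_odd_iota a d b :
  count (fun n => odd n == b) (iota a d) = if odd a == b then uphalf d else d./2.
Proof.
elim: d a => [|d IHd] a; first by case: (odd a == b).
by rewrite /= {}IHd oddS; case: (odd a); case: b.
Qed.

Lemma count_parity_color_iota a d i :
  count (fun n => parity_color n == i) (iota a d) <= uphalf d.
Proof.
have half_le_uphalf : d./2 <= uphalf d by rewrite uphalf_half leq_addl.
have sub_parity : subpred (fun n => parity_color n == i) (fun n => odd n == (i == 1)).
  by move=> n; rewrite /parity_color; case: (odd n) => /eqP <-.
apply: leq_trans (sub_count sub_parity _) _.
by rewrite count_odd_iota; case: (_ == _).
Qed.

Lemma sum_parity_color_iota a d :
  \sum_(n <- iota a d) parity_color n = d + (if odd a then d./2 else uphalf d).
Proof.
elim: d a => [|d IHd] a; first by rewrite big_nil; case: (odd a).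
by rewrite /= big_cons IHd oddS /parity_color; case: (odd a) => /=; lia.
Qed.

Lemma sum_parity_color_iota_lt a a' d d' : d < d' ->
  \sum_(n <- iota a d) parity_color n < \sum_(n <- iota a' d') parity_color n.
Proof.
move=> lt_dd'; rewrite !sum_parity_color_iota.
have := half_leq lt_dd'; rewrite -uphalfE.
have := uphalf_half d; have := odd_double_half d.
have := uphalf_half d'; have := odd_double_half d'.
by case: (odd a); case: (odd a'); lia.
Qed.

Lemma edge_in_edges (T : finType) (e : rel T) x y : e x y -> [set x; y] \in edges e.
Proof. by move=> exy; apply/imset2P; exists x y; rewrite ?inE. Qed.

Section ParityOfIntervalColoring.

Variables (T : finType) (e : rel T) (c : {set T} -> nat).
Hypothesis interval_at : forall v, exists a,
  perm_eq [seq c [set v; u] | u <- enum (nbhd e v)] (iota a (deg e v)).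

Lemma sum_nbhd_interval v : exists a, forall F : nat -> nat,
  \sum_(u in nbhd e v) F (c [set v; u]) = \sum_(n <- iota a (deg e v)) F n.
Proof.
have [a perm_a] := interval_at v; exists a => F.
by rewrite -big_enum -(big_map (fun u => c [set v; u]) xpredT); apply: perm_big.
Qed.

Let pc (E : {set T}) : nat := parity_color (c E).

Lemma parity_coloring_2 : is_k_edge_coloring e 2 pc.
Proof. by move=> E _; rewrite /pc /parity_color; case: (odd _). Qed.

Lemma parity_coloring_quasi_majority : quasi_majority e pc.
Proof.
move=> v i; have [a sumE] := sum_nbhd_interval v.
have -> : #|[set u in nbhd e v | pc [set v; u] == i]|
          = \sum_(u in nbhd e v) (parity_color (c [set v; u]) == i : nat).
  rewrite -sum1_card big_mkcond [RHS]big_mkcond; apply: eq_bigr => u _.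
  by rewrite !inE; case: (e v u); case: (_ == _).
rewrite (sumE (fun n => parity_color n == i : nat)).
apply: leq_trans (count_parity_color_iota a _ i).
by rewrite -sum1_count [leqRHS]big_mkcond.
Qed.

Lemma parity_coloring_nsd :
  (forall u v, e u v -> deg e u <> deg e v) -> nsd e pc.
Proof.
move=> deg_neq u v euv; rewrite /sigma.
have [a sumEa] := sum_nbhd_interval u; have [b sumEb] := sum_nbhd_interval v.
rewrite (sumEa parity_color) (sumEb parity_color).
have [lt_uv | lt_vu | eq_uv] := ltngtP (deg e u) (deg e v).
- by move=> eq_sums; move: (sum_parity_color_iota_lt a b lt_uv); rewrite eq_sums ltnn.
- by move=> eq_sums; move: (sum_parity_color_iota_lt b a lt_vu); rewrite eq_sums ltnn.
- by case: (deg_neq u v euv eq_uv).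
Qed.

End ParityOfIntervalColoring.

Section NoOneColoring.

Variables (T : finType) (e : rel T).

Lemma k_edge_coloring_gt0 k c :
  (exists u v, e u v) -> is_k_edge_coloring e k c -> 0 < k.
Proof. by move=> [u [v euv]] /(_ _ (edge_in_edges euv)) /andP[/leq_trans]; apply. Qed.

Lemma quasi_majority_1_coloring_deg_le1 c v :
  is_k_edge_coloring e 1 c -> quasi_majority e c -> deg e v <= 1.
Proof.
move=> col1 qm; have := qm v 1.
have -> : [set u in nbhd e v | c [set v; u] == 1] = nbhd e v.
  apply/setP => u; rewrite !inE; case evu: (e v u) => //=.
  by move: (col1 _ (edge_in_edges evu)) => /andP[]; lia.
rewrite /deg; have := uphalf_half #|nbhd e v|; have := odd_double_half #|nbhd e v|.
lia.
Qed.

Lemma deg_gt0 u v : e u v -> 0 < deg e u.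
Proof. by move=> euv; apply/card_gt0P; exists v; rewrite inE. Qed.

Lemma distinct_deg_edge_deg_gt1 u v : symmetric e -> e u v ->
  deg e u <> deg e v -> exists w, 1 < deg e w.
Proof.
move=> esym euv; have := deg_gt0 euv; have := deg_gt0 (etrans (esym v u) euv).
case: (ltnP 1 (deg e u)) => [? | ?]; first by exists u.
case: (ltnP 1 (deg e v)) => [? | ?]; first by exists v.
lia.
Qed.

End NoOneColoring.

Theorem mainTheorem17 (T : finType) (e : rel T) :
  simple_graph e ->
  (exists u v, e u v) ->
  nice e ->
  (forall u v, e u v -> deg e u <> deg e v) ->
  has_interval_coloring e ->
  chi_qmS_eq e 2.
Proof.
move=> [esym _] has_edge _ deg_neq [c [_ interval_at]]; split.
  exists (fun E => parity_color (c E)); split; first exact: parity_coloring_2.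
  split; first exact: parity_coloring_quasi_majority.
  exact: parity_coloring_nsd.
move=> j lt_j2 [c' [colj [qm _]]].
have j_eq1 : j = 1 by have := k_edge_coloring_gt0 has_edge colj; lia.
subst j; have [u [v euv]] := has_edge.
have [w deg_w] := distinct_deg_edge_deg_gt1 esym euv (deg_neq u v euv).
by have := quasi_majority_1_coloring_deg_le1 w colj qm; lia.
Qed.
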